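(* Let $Z$ be a non-empty GTA zone and let $R\subseteq X_F$ be a set of future clocks such that for each $x\in R$ there is a valuation $v_x\in Z$ with $v_x(x)=-\infty$. Then there exist valuations $v\in Z$ such that $v(x)=-\infty$ for all $x\in R$.
   Context: $X=X_F\uplus X_H$ is a finite set of clocks (future clocks $X_F$, history clocks $X_H$) plus a constant clock $0$. $\overline{\mathbb{R}}=\mathbb{R}\cup\{\pm\infty\}$ with $(+\infty)+\alpha=+\infty$, $(-\infty)+\beta=-\infty$ for $\beta\neq+\infty$, $-(\pm\infty)=\mp\infty$. A valuation is $v:X\cup\{0\}\to\overline{\mathbb{R}}$ with $v(0)=0$, history clocks in $\mathbb{R}_{\ge 0}\cup\{+\infty\}$, future clocks in $\mathbb{R}_{\le0}\cup\{-\infty\}$. A GTA zone is a set of valuations defined by a conjunction of constraints $y-x\triangleleft c$ with $x,y\in X\cup\{0\}$, $c\in\mathbb{Z}\cup\{-\infty,+\infty\}$, ${\triangleleft}\in\{<,\le\}$, where $v\models y-x\triangleleft c$ iff $v(y)-v(x)\triangleleft c$. *)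

From Stdlib Require Import Reals ZArith List.
From Coquelicot Require Import Rbar.
Open Scope R_scope.

(* Clocks: a type C of (non-constant) clocks; [isF c = true] iff c is a future
   clock (X_F), otherwise c is a history clock (X_H).  The set X ∪ {0} is
   [option C], with [None] the constant clock 0. *)
Definition clk (C : Type) := option C.

Definition eadd (a b : Rbar) : Rbar :=
  match a, b with
  | p_infty, _ => p_infty
  | _, p_infty => p_infty
  | m_infty, _ => m_infty
  | _, m_infty => m_infty
  | Finite x, Finite y => Finite (x + y)
  end.

Definition esub (a b : Rbar) : Rbar := eadd a (Rbar_opp b).

Definition valuation (C : Type) (isF : C -> bool) (v : clk C -> Rbar) : Prop :=
  v None = Finite 0 /\
  forall c : C,
    if isF c then Rbar_le (v (Some c)) (Finite 0)
    else Rbar_le (Finite 0) (v (Some c)).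

Inductive zbar : Type := ZFin (z : Z) | ZPInf | ZMInf.

Definition zbar_to_Rbar (c : zbar) : Rbar :=
  match c with
  | ZFin z => Finite (IZR z)
  | ZPInf => p_infty
  | ZMInf => m_infty
  end.

Record constraint (C : Type) := mkConstraint {
  c_y : clk C; c_x : clk C; c_bound : zbar; c_strict : bool }.
Arguments mkConstraint {C}.
Arguments c_y {C}. Arguments c_x {C}. Arguments c_bound {C}. Arguments c_strict {C}.

Definition sat {C : Type} (v : clk C -> Rbar) (k : constraint C) : Prop :=
  let d := esub (v (c_y k)) (v (c_x k)) in
  if c_strict k then Rbar_lt d (zbar_to_Rbar (c_bound k))
  else Rbar_le d (zbar_to_Rbar (c_bound k)).

Definition is_GTA_zone (C : Type) (isF : C -> bool)
    (Zn : (clk C -> Rbar) -> Prop) : Prop :=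
  exists cs : list (constraint C),
    forall v, Zn v <-> (valuation C isF v /\ Forall (sat v) cs).

(* A GTA zone is closed under the pointwise minimum of valuations: for a
   constraint y - x ◁ c, the minimum at x is attained by one of the two
   valuations, say v, and then min(v,w)(y) - v(x) <= v(y) - v(x) ◁ c.  Taking
   the minimum of a valuation of Z with one witness v_x per clock x of R (R is
   finite) gives a valuation of Z that is -oo on all of R. *)
From Stdlib Require Import Reals ZArith List Classical Lra.
From Coquelicot Require Import Rbar.

Lemma esub_le_compat_l a a' b : Rbar_le a a' -> Rbar_le (esub a b) (esub a' b).
Proof.
  destruct a as [x| |], a' as [x'| |], b as [y| |]; simpl; intros H;
    try contradiction; auto; lra.
Qed.

Lemma sat_of_le {C : Type} (u v : clk C -> Rbar) (k : constraint C) :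
  u (c_x k) = v (c_x k) -> Rbar_le (u (c_y k)) (v (c_y k)) -> sat v k -> sat u k.
Proof.
  unfold sat; intros Hx Hy Hsat; rewrite Hx.
  pose proof (esub_le_compat_l _ _ (v (c_x k)) Hy) as Hmono.
  destruct (c_strict k).
  - exact (Rbar_le_lt_trans _ _ _ Hmono Hsat).
  - exact (Rbar_le_trans _ _ _ Hmono Hsat).
Qed.

Lemma sat_min {C : Type} (v w : clk C -> Rbar) (k : constraint C) :
  sat v k -> sat w k -> sat (fun z => Rbar_min (v z) (w z)) k.
Proof.
  intros Hv Hw.
  assert (Hx : Rbar_min (v (c_x k)) (w (c_x k)) = v (c_x k) \/
               Rbar_min (v (c_x k)) (w (c_x k)) = w (c_x k))
    by (apply Rbar_min_case; auto).
  destruct Hx as [Hx | Hx].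
  - exact (sat_of_le _ v k Hx (Rbar_min_l _ _) Hv).
  - exact (sat_of_le _ w k Hx (Rbar_min_r _ _) Hw).
Qed.

Lemma valuation_min (C : Type) (isF : C -> bool) (v w : clk C -> Rbar) :
  valuation C isF v -> valuation C isF w ->
  valuation C isF (fun z => Rbar_min (v z) (w z)).
Proof.
  intros [Hv0 Hv] [Hw0 Hw]; split.
  - rewrite Hv0, Hw0; simpl; rewrite Rmin_left; [reflexivity | lra].
  - intro c; specialize (Hv c); specialize (Hw c); destruct (isF c).
    + exact (Rbar_le_trans _ _ _ (Rbar_min_l _ _) Hv).
    + now apply Rbar_min_case.
Qed.

Lemma GTA_zone_min (C : Type) (isF : C -> bool) (Zn : (clk C -> Rbar) -> Prop) :
  is_GTA_zone C isF Zn ->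
  forall v w, Zn v -> Zn w -> Zn (fun z => Rbar_min (v z) (w z)).
Proof.
  intros [cs Hcs] v w Hv Hw.
  apply Hcs in Hv as [Hv_val Hv_sat]; apply Hcs in Hw as [Hw_val Hw_sat].
  apply Hcs; split.
  - now apply valuation_min.
  - rewrite Forall_forall in *; intros k Hk; apply sat_min; auto.
Qed.

Section MinClosed.

Variables (T : Type) (Zn : (T -> Rbar) -> Prop).
Hypothesis Zn_min : forall v w, Zn v -> Zn w -> Zn (fun z => Rbar_min (v z) (w z)).

Lemma min_closed_common_m_infty (P : T -> Prop) (l : list T) :
  (exists v, Zn v) ->
  (forall x, P x -> exists vx, Zn vx /\ vx x = m_infty) ->
  exists v, Zn v /\ forall x, In x l -> P x -> v x = m_infty.
Proof.
  intros [v0 Hv0] Hwit.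
  induction l as [|a l [v [Hv Hv_l]]].
  - now exists v0.
  - destruct (classic (P a)) as [Ha | Ha].
    + destruct (Hwit a Ha) as [w [Hw Hwa]].
      exists (fun z => Rbar_min (v z) (w z)); split; [now apply Zn_min|].
      intros x [<- | Hx] Hx_P.
      * rewrite Hwa; now destruct (v a).
      * rewrite (Hv_l x Hx Hx_P); now destruct (w x).
    + exists v; split; [exact Hv|].
      intros x [<- | Hx] Hx_P; [contradiction | auto].
Qed.

End MinClosed.

Theorem lemma12
  (C : Type) (C_finite : exists l : list C, forall c, In c l)
  (isF : C -> bool)
  (Zn : (clk C -> Rbar) -> Prop)
  (HZ : is_GTA_zone C isF Zn)
  (Hne : exists v, Zn v)
  (Rset : C -> Prop)
  (HRF : forall x, Rset x -> isF x = true)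
  (HR : forall x, Rset x -> exists vx, Zn vx /\ vx (Some x) = m_infty) :
  exists v, Zn v /\ forall x, Rset x -> v (Some x) = m_infty.
Proof.
  destruct C_finite as [l Hl].
  set (P := fun z : clk C => match z with Some x => Rset x | None => False end).
  destruct (min_closed_common_m_infty _ Zn (GTA_zone_min C isF Zn HZ)
              P (map Some l) Hne) as [v [Hv Hv_R]].
  - intros [x|] Hx; [exact (HR x Hx) | contradiction].
  - exists v; split; [exact Hv|].
    intros x Hx; apply Hv_R; [apply in_map, Hl | exact Hx].
Qed.
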